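(* Let $G$ be a finite simple graph, and suppose $w_1(u)=c$ for all $u\in V(G)$, where $c$ is a fixed real number. Then for any edge weight function $w$, the multiplicity of $c$ as a root of $\eta_{(w,w_1)}(G,x)$ equals $\mathrm{def}(G)$, the number of vertices left uncovered by a maximum matching of $G$.
   Context: An edge weight function $w$ assigns a nonzero complex number to each edge; induced subgraphs carry restricted weights. For $A\subseteq E(G)$, $w(A)=\prod_{e\in A}w(e)$. $\mu_w(G,x)=\sum_{M}(-1)^{|M|}|w(M)|^2x^{n-2|M|}$ over all matchings $M$ of $G$ (including empty), $n=|V(G)|$. $\eta_{(w,w_1)}(G,x)=\sum_{S\subseteq V(G)}(-1)^{|V(G)\setminus S|}\big(\prod_{y\in V(G)\setminus S}w_1(y)\big)\mu_w(G[S],x)$ with $G[S]$ the induced subgraph and $\mu_w$ of the empty graph equal to $1$. *)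

From HB Require Import structures.
From mathcomp Require Import all_boot all_order all_algebra.
From mathcomp Require Import complex.
From mathcomp Require Import reals.
Set Implicit Arguments. Unset Strict Implicit. Unset Printing Implicit Defensive.
Import Order.TTheory GRing.Theory Num.Theory.
Local Open Scope ring_scope.

(* A finite simple graph on vertex type T: e symmetric and irreflexive.
   Edges are the 2-element vertex sets {x,y} with e x y. *)
Definition edges (T : finType) (e : rel T) : {set {set T}} :=
  [set A : {set T} | [exists x : T, exists y : T, e x y && (A == [set x; y])]].

Definition is_matching (T : finType) (e : rel T) (M : {set {set T}}) : bool :=
  (M \subset edges e) &&
  [forall A in M, forall B in M, (A != B) ==> [disjoint A & B]].

(* Matchings of the induced subgraph G[S]: matchings of G all of whose edges lie in S. *)
Definition matchings_in (T : finType) (e : rel T) (S : {set T}) : {set {set {set T}}} :=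
  [set M | is_matching e M & [forall A in M, A \subset S]].

Definition mu_w (R : realType) (T : finType) (e : rel T) (w : {set T} -> R[i])
    (S : {set T}) : {poly R[i]} :=
  \sum_(M in matchings_in e S)
     ((-1) ^+ #|M| * `|\prod_(A in M) w A| ^+ 2) *: 'X^(#|S| - 2 * #|M|).

Definition eta_w (R : realType) (T : finType) (e : rel T) (w : {set T} -> R[i])
    (w1 : T -> R[i]) : {poly R[i]} :=
  \sum_(S : {set T})
     ((-1) ^+ #|~: S| * \prod_(y in ~: S) w1 y) *: mu_w e w S.

Definition matching_number (T : finType) (e : rel T) : nat :=
  \max_(M : {set {set T}} | is_matching e M) #|M|.

Definition deficiency (T : finType) (e : rel T) : nat :=
  (#|T| - 2 * matching_number e)%N.

From HB Require Import structures.
From mathcomp Require Import all_boot all_order all_algebra.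
From mathcomp Require Import complex.
From mathcomp Require Import reals.
Set Implicit Arguments.
Unset Strict Implicit.
Unset Printing Implicit Defensive.
Import Order.TTheory GRing.Theory Num.Theory.
Local Open Scope ring_scope.

(* With a constant vertex weight c, summing over the vertex sets S containing
   the cover of a matching M collapses the factors x^(|S| - 2|M|) into
   (x - c)^(|V| - 2|M|), so eta is a combination of powers of (x - c) whose
   lowest exponent is def(G).  Its coefficient is (-1)^nu times the sum of
   |w(M)|^2 over the maximum matchings, which is a positive real. *)

Lemma sum_supsets_XsubC (K : comNzRingType) (T : finType) (C : {set T}) (x : K) :
  \sum_(S : {set T} | C \subset S)
     ((-1) ^+ #|~: S| * x ^+ #|~: S|) *: 'X^(#|S| - #|C|)
  = ('X - x%:P) ^+ #|~: C|.
Proof.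
pose F (i : T) : {poly K} := if i \in C then 1 else 'X.
pose G (i : T) : {poly K} := if i \in C then 0 else - x%:P.
have -> : ('X - x%:P) ^+ #|~: C| = \prod_i (F i + G i).
  rewrite -prodr_const big_mkcond /=; apply: eq_bigr => i _.
  by rewrite /F /G inE; case: (i \in C); rewrite ?addr0.
rewrite bigA_distr big_mkcond /=; apply: eq_bigr => S _.
have [CS | /subsetPn [i iC iS]] := boolP (C \subset S); last first.
  by rewrite (bigD1 i) //= (negbTE iS) /G iC mul0r.
rewrite (eq_bigr (fun i => (if i \in S :\: C then 'X else 1) *
                           (if i \in ~: S then - x%:P else 1))); last first.
  move=> i _; rewrite /F /G !inE.
  case iS: (i \in S); case iC: (i \in C); rewrite /= ?mulr1 ?mul1r //.
  by move: (subsetP CS i); rewrite iC iS => /(_ isT).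
rewrite big_split /= -!big_mkcond /= !prodr_const cardsD (setIidPr CS).
by rewrite -mul_polyC mulrC polyCM !rmorphXn -exprMn rmorphN1 mulN1r.
Qed.

Lemma mup_sum_XsubC_exp (F : fieldType) (I : finType) (P : pred I)
    (a : I -> F) (n : I -> nat) (m : nat) (c : F) :
  (forall i, P i -> m <= n i)%N ->
  \sum_(i | P i && (n i == m)) a i != 0 ->
  mup c (\sum_(i | P i) a i *: ('X - c%:P) ^+ n i) = m.
Proof.
move=> le_m_n lowest_neq0.
rewrite (eq_bigr (fun i => ('X - c%:P) ^+ m * (a i *: ('X - c%:P) ^+ (n i - m))));
  last by move=> i Pi; rewrite -scalerAr -exprD subnKC ?le_m_n.
rewrite -mulr_sumr mupMl ?mup_XsubCX ?eqxx // /root horner_sum.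
rewrite (eq_bigr (fun i => if n i == m then a i else 0)); last first.
  move=> i Pi; rewrite hornerZ horner_exp hornerXsubC subrr expr0n subn_eq0.
  by rewrite eqn_leq le_m_n ?andbT //; case: (_ <= _)%N; rewrite ?mulr1 ?mulr0.
by rewrite -big_mkcondr.
Qed.

Section Matchings.

Variables (T : finType) (e : rel T).
Hypothesis e_irr : irreflexive e.

Lemma card_edge (A : {set T}) : A \in edges e -> #|A| = 2%N.
Proof.
rewrite inE => /existsP [x /existsP [y /andP [exy /eqP ->]]].
rewrite cards2; have -> // : x != y.
by apply: contraTneq exy => ->; rewrite e_irr.
Qed.

Lemma card_cover_matching (M : {set {set T}}) :
  is_matching e M -> #|cover M| = (2 * #|M|)%N.
Proof.
move=> /andP [sub /forallP disj].
have /eqP <- : trivIset M.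
  apply/trivIsetP => A B AM BM AB.
  by have := disj A; rewrite AM /= => /forallP /(_ B); rewrite BM AB.
rewrite (eq_bigr (fun _ => 2%N)) => [|A AM]; last exact/card_edge/(subsetP sub).
by rewrite sum_nat_const mulnC.
Qed.

Lemma matchings_inE (S : {set T}) (M : {set {set T}}) :
  (M \in matchings_in e S) = is_matching e M && (cover M \subset S).
Proof.
rewrite inE; congr (_ && _).
apply/forallP/bigcupsP => [inS A AM | inS A]; first by have := inS A; rewrite AM.
by apply/implyP => /inS.
Qed.

Lemma card_matching_le (M : {set {set T}}) :
  is_matching e M -> (#|M| <= matching_number e)%N.
Proof. exact: (@leq_bigmax_cond _ (is_matching e) (fun M => #|M|)). Qed.

Lemma exists_maximum_matching :
  exists2 M, is_matching e M & #|M| = matching_number e.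
Proof.
have matching0 : is_matching e set0.
  by rewrite /is_matching sub0set; apply/forallP => A; rewrite inE.
have [|M mM maxM] :=
  @eq_bigmax_cond _ [pred M | is_matching e M] (fun M : {set {set T}} => #|M|).
  by apply/card_gt0P; exists set0.
by exists M; rewrite // -maxM.
Qed.

Lemma double_matching_number_le : (2 * matching_number e <= #|T|)%N.
Proof.
have [M mM <-] := exists_maximum_matching.
by rewrite -card_cover_matching // max_card.
Qed.

Lemma eta_w_const_vertex_weight (R : realType) (w : {set T} -> R[i])
    (w1 : T -> R[i]) (c : R[i]) :
  (forall u, w1 u = c) ->
  eta_w e w w1 = \sum_(M | is_matching e M)
     ((-1) ^+ #|M| * `|\prod_(A in M) w A| ^+ 2) *: ('X - c%:P) ^+ (#|T| - 2 * #|M|).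
Proof.
move=> w1_const; rewrite /eta_w /mu_w.
under eq_bigr => S _ do under eq_bigr => y _ do rewrite w1_const.
under eq_bigr => S _ do rewrite prodr_const scaler_sumr.
under eq_bigr => S _ do under eq_bigl => M do rewrite matchings_inE.
rewrite (exchange_big_dep (is_matching e)) /=; last by move=> S M _ /andP [].
apply: eq_bigr => M mM; under eq_bigl => S do rewrite mM /=.
under eq_bigr => S _ do
  rewrite scalerA [X in X *: _]mulrC -scalerA -(card_cover_matching mM).
by rewrite -scaler_sumr sum_supsets_XsubC cardsCs setCK card_cover_matching.
Qed.

End Matchings.

Theorem lemma6p6 (R : realType) (T : finType) (e : rel T)
  (e_sym : symmetric e) (e_irr : irreflexive e)
  (w : {set T} -> R[i]) (w_nz : forall A, A \in edges e -> w A != 0)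
  (w1 : T -> R[i]) (c : R) (hw1 : forall u, w1 u = (c%:C)%C) :
  mup (c%:C)%C (eta_w e w w1) = deficiency e.
Proof.
rewrite (eta_w_const_vertex_weight e_irr _ hw1) /deficiency.
apply: mup_sum_XsubC_exp => [M /card_matching_le le_M|].
  by rewrite leq_sub2l // leq_mul2l le_M orbT.
rewrite (eq_bigl (fun M => is_matching e M && (#|M| == matching_number e))); last first.
  move=> M; case mM: (is_matching e M) => //=.
  rewrite eqn_sub2lE ?eqn_pmul2l ?double_matching_number_le //.
  by rewrite -(card_cover_matching e_irr mM) max_card.
under eq_bigr => M /andP [_ /eqP ->] do over.
rewrite -mulr_sumr mulf_eq0 negb_or signr_eq0 /=.
have [M0 mM0 cardM0] := exists_maximum_matching e.
rewrite psumr_neq0 => [|M _]; last by rewrite exprn_ge0.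
apply/hasP; exists M0; first by rewrite mem_index_enum.
rewrite mM0 cardM0 eqxx /= exprn_gt0 // normr_gt0.
apply/prodf_neq0 => A AM; apply: w_nz.
by move: mM0 => /andP [/subsetP sub _]; apply: sub.
Qed.
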